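(* Let $\mathcal{P}^{\uparrow}_+$ be the proper orthochronous Poincaré group on $\mathbb{R}^4$, i.e. the group of maps $x\mapsto Lx+b$ with $b\in\mathbb{R}^4$ and $L$ in the proper orthochronous Lorentz group of the form $g=\mathrm{diag}(1,1,1,-c^2)$. Then every $\mathcal{P}^{\uparrow}_+$-invariant equivalence relation on $\mathbb{R}^4$ is trivial, i.e. it is either the total relation $\mathbb{R}^4\times\mathbb{R}^4$ or the identity relation.
   Context: An equivalence relation $\sim$ is $\mathcal{P}^{\uparrow}_+$-invariant if $x\sim y$ implies $h(x)\sim h(y)$ for all $x,y\in\mathbb{R}^4$ and all $h\in\mathcal{P}^{\uparrow}_+$. *)

From mathcomp Require Import all_boot all_order all_algebra.
From mathcomp Require Import reals.
Set Implicit Arguments. Unset Strict Implicit. Unset Printing Implicit Defensive.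
Import Order.TTheory GRing.Theory Num.Theory.
Local Open Scope ring_scope.

(* Coordinates of R^4 are indexed by 'I_4 = {0,1,2,3}; index 3 is time. *)
Definition time_idx : 'I_4 := ord_max.

Definition minkowski_metric (R : realType) (c : R) : 'M[R]_4 :=
  \matrix_(i, j) (if i == j then (if i == time_idx then - c ^+ 2 else 1) else 0).

Definition proper_orthochronous_lorentz (R : realType) (c : R) (L : 'M[R]_4) : Prop :=
  L^T *m minkowski_metric c *m L = minkowski_metric c /\
  \det L = 1 /\
  0 < L time_idx time_idx.

Definition poincare_act (R : realType) (L : 'M[R]_4) (b x : 'cV[R]_4) : 'cV[R]_4 :=
  L *m x + b.

Definition equiv_relation_on (T : Type) (r : T -> T -> Prop) : Prop :=
  (forall x, r x x) /\ (forall x y, r x y -> r y x) /\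
  (forall x y z, r x y -> r y z -> r x z).

Definition poincare_invariant (R : realType) (c : R) (r : 'cV[R]_4 -> 'cV[R]_4 -> Prop) : Prop :=
  forall (L : 'M[R]_4) (b : 'cV[R]_4), proper_orthochronous_lorentz c L ->
    forall x y, r x y -> r (poincare_act L b x) (poincare_act L b y).

From mathcomp Require Import all_boot all_order all_algebra.
From mathcomp Require Import reals.
From mathcomp Require Import ring lra.
From Stdlib Require Import Classical.
Set Implicit Arguments. Unset Strict Implicit. Unset Printing Implicit Defensive.
Import Order.TTheory GRing.Theory Num.Theory.
Local Open Scope ring_scope.

(* An invariant equivalence relation r is determined by the set S of vectors v
   with r 0 v: translation invariance makes r x y equivalent to y - x in S, and
   S is an additive subgroup stable under the Lorentz group.  Such a subgroup
   containing some v <> 0 is everything: combining v with its images under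
   rotations by pi isolates a nonzero multiple of a coordinate axis; the
   difference of the boosts by k and by k^-1 of a spatial axis vector is a time
   vector of any prescribed length (as k - k^-1 ranges over R), and boosting a
   time vector and subtracting a suitable time vector gives any spatial axis
   vector. *)

Section Coordinates.
Variable R : realType.
Implicit Types (c : R) (f g : nat -> nat -> R) (u w : nat -> R).

(* Matrices and column vectors are built from nat-indexed coefficients, so that
   entrywise identities reduce to a case analysis on four concrete indices. *)
Definition mxn f : 'M[R]_4 := \matrix_(i, j) f i j.
Definition vecn u : 'cV[R]_4 := \col_i u i.

Lemma mxn_eq f g :
  (forall i j, (i < 4)%N -> (j < 4)%N -> f i j = g i j) -> mxn f = mxn g.
Proof. by move=> fg; apply/matrixP => i j; rewrite !mxE fg. Qed.

Lemma vecn_eq u w : (forall i, (i < 4)%N -> u i = w i) -> vecn u = vecn w.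
Proof. by move=> uw; apply/matrixP => i j; rewrite !mxE uw. Qed.

Lemma trmxn f : (mxn f)^T = mxn (fun i j => f j i).
Proof. by apply/matrixP => i j; rewrite !mxE. Qed.

Lemma mulmxn f g : mxn f *m mxn g = mxn (fun i j =>
  f i 0%N * g 0%N j + f i 1%N * g 1%N j + f i 2%N * g 2%N j + f i 3%N * g 3%N j).
Proof. by apply/matrixP => i j; rewrite !mxE !big_ord_recr big_ord0 /= add0r !mxE. Qed.

Lemma mulmxvn f u : mxn f *m vecn u = vecn (fun i =>
  f i 0%N * u 0%N + f i 1%N * u 1%N + f i 2%N * u 2%N + f i 3%N * u 3%N).
Proof. by apply/matrixP => i j; rewrite !mxE !big_ord_recr big_ord0 /= add0r !mxE. Qed.

Lemma addvn u w : vecn u + vecn w = vecn (fun i => u i + w i).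
Proof. by apply/matrixP => i j; rewrite !mxE. Qed.

Lemma oppvn u : - vecn u = vecn (fun i => - u i).
Proof. by apply/matrixP => i j; rewrite !mxE. Qed.

Lemma vecn_surj (v : 'cV[R]_4) : exists u, v = vecn u.
Proof.
exists (fun i => v (inord i) 0); apply/matrixP => i j.
by rewrite !mxE ord1; congr (v _ _); apply/val_inj; rewrite /= inordK.
Qed.

Definition axisv (j : nat) (a : R) : 'cV[R]_4 :=
  vecn (fun i => if i == j then a else 0).

Lemma vecn_axis_sum u : vecn u =
  axisv 0 (u 0%N) + axisv 1 (u 1%N) + axisv 2 (u 2%N) + axisv 3 (u 3%N).
Proof. by rewrite /axisv !addvn; apply: vecn_eq => -[|[|[|[|?]]]] // _ /=; ring. Qed.

Lemma vecn_neq0 u : vecn u != 0 -> exists2 i, (i < 4)%N & u i != 0.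
Proof.
move=> u0; have /existsP[i ui0] : [exists i : 'I_4, u i != 0].
  apply: contraR u0 => /existsPn u0; apply/eqP/matrixP => i j.
  by rewrite !mxE; apply/eqP/negPn/u0.
by exists i.
Qed.

Definition minkowski_coef (c : R) (i j : nat) : R :=
  if i == j then (if i == 3%N then - c ^+ 2 else 1) else 0.

Lemma minkowski_metricE c : minkowski_metric c = mxn (minkowski_coef c).
Proof.
by apply/matrixP => -[[|[|[|[|?]]]] ?] -[[|[|[|[|?]]]] ?]; rewrite !mxE.
Qed.

Lemma det_mxn_diag f : (forall i j, i != j -> f i j = 0) ->
  \det (mxn f) = f 0%N 0%N * f 1%N 1%N * f 2%N 2%N * f 3%N 3%N.
Proof.
move=> f_diag; rewrite det_trig; last first.
  by apply/is_trig_mxP => i j ltij; rewrite mxE f_diag // ltn_eqF.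
by rewrite !big_ord_recr big_ord0 /= mul1r !mxE.
Qed.

Lemma det_minkowski_metric_neq0 c : c != 0 -> \det (minkowski_metric c) != 0.
Proof.
move=> c0; rewrite minkowski_metricE det_mxn_diag; last first.
  by move=> i j; rewrite /minkowski_coef => /negbTE ->.
by rewrite /minkowski_coef /= !mul1r oppr_eq0 expf_neq0.
Qed.

Lemma det_lorentz_sqr c (L : 'M[R]_4) : c != 0 ->
  L^T *m minkowski_metric c *m L = minkowski_metric c -> \det L ^+ 2 = 1.
Proof.
move=> c0 /(congr1 determinant); rewrite !det_mulmx det_tr.
rewrite mulrAC -expr2 -[RHS]mul1r => /mulIf; apply.
exact: det_minkowski_metric_neq0.
Qed.

End Coordinates.

Section LorentzElements.
Variable R : realType.
Implicit Types (c k l : R) (a : nat).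

Definition spatial_flip (s0 s1 s2 : R) (i j : nat) : R :=
  if i == j then nth 1 [:: s0; s1; s2] i else 0.

Lemma spatial_flip_lorentz c (s0 s1 s2 : R) :
  s0 ^+ 2 = 1 -> s1 ^+ 2 = 1 -> s2 ^+ 2 = 1 -> s0 * s1 * s2 = 1 ->
  proper_orthochronous_lorentz c (mxn (spatial_flip s0 s1 s2)).
Proof.
move=> s0E s1E s2E detE; split; [|split].
- rewrite minkowski_metricE trmxn !mulmxn; apply: mxn_eq.
  move=> [|[|[|[|?]]]] [|[|[|[|?]]]] // _ _.
  rewrite /spatial_flip /minkowski_coef /=.
  all: rewrite ?(mul0r, mulr0, addr0, add0r, mulr1, mul1r) -?expr2 //.
- by rewrite det_mxn_diag /spatial_flip ?mulr1 // => i j /negbTE ->.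
- by rewrite mxE /spatial_flip /= ltr01.
Qed.

Lemma exists_sub_inv (mu : R) : exists2 k : R, 0 < k & k - k^-1 = mu.
Proof.
set s := Num.sqrt (mu ^+ 2 + 4).
have s_ge0 : 0 <= s := sqrtr_ge0 _.
have sE : s ^+ 2 = mu ^+ 2 + 4 by rewrite sqr_sqrtr // addr_ge0 // sqr_ge0.
have k_gt0 : 0 < (mu + s) / 2 by apply: divr_gt0 => //; nra.
exists ((mu + s) / 2) => //.
apply: (mulIf (lt0r_neq0 k_gt0)); rewrite mulrBl mulVf ?lt0r_neq0 //.
by rewrite -expr2 expr_div_n sqrrD sE; field.
Qed.

(* The boost of parameter k = exp(rapidity) along the spatial axis a; its
   hyperbolic cosine and sine are (k + k^-1)/2 and (k - k^-1)/2. *)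
Definition boost a c k (i j : nat) : R :=
  if i == j then (if (i == a) || (i == 3)%N then (k + k^-1) / 2 else 1)
  else if (i == a) && (j == 3)%N then c * (k - k^-1) / 2
  else if (i == 3)%N && (j == a) then (k - k^-1) / (2 * c) else 0.

Lemma boost_isometry a c k : (a < 3)%N -> c != 0 -> k != 0 ->
  (mxn (boost a c k))^T *m minkowski_metric c *m mxn (boost a c k) =
  minkowski_metric c.
Proof.
move=> lta3 c0 k0; rewrite minkowski_metricE trmxn !mulmxn; apply: mxn_eq.
case: a lta3 => [|[|[|?]]] // _ [|[|[|[|?]]]] [|[|[|[|?]]]] // _ _.
all: rewrite /boost /minkowski_coef /=; field; by rewrite ?c0 ?k0.
Qed.

Lemma boost_mul a c k l : (a < 3)%N -> c != 0 -> k != 0 -> l != 0 ->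
  mxn (boost a c k) *m mxn (boost a c l) = mxn (boost a c (k * l)).
Proof.
move=> lta3 c0 k0 l0; rewrite mulmxn; apply: mxn_eq.
case: a lta3 => [|[|[|?]]] // _ [|[|[|[|?]]]] [|[|[|[|?]]]] // _ _.
all: rewrite /boost /= ?invfM; field; by rewrite ?c0 ?k0 ?l0.
Qed.

(* Every boost is the square of a boost, so its determinant, a square root
   of 1, is nonnegative. *)
Lemma boost_lorentz a c k : (a < 3)%N -> 0 < c -> 0 < k ->
  proper_orthochronous_lorentz c (mxn (boost a c k)).
Proof.
move=> lta3 c_gt0 k_gt0; have c0 := lt0r_neq0 c_gt0.
split; [|split]; first exact: boost_isometry lta3 c0 (lt0r_neq0 k_gt0).
- have m_gt0 : 0 < Num.sqrt k by rewrite sqrtr_gt0.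
  have m0 := lt0r_neq0 m_gt0.
  have /eqP := det_lorentz_sqr c0 (boost_isometry lta3 c0 m0).
  rewrite sqrf_eq1 => /orP[/eqP d1 | /eqP dN1].
  + by rewrite -[k]sqr_sqrtr ?ltW // expr2 -boost_mul // det_mulmx d1 mulr1.
  + by rewrite -[k]sqr_sqrtr ?ltW // expr2 -boost_mul // det_mulmx dN1 mulrNN mulr1.
- rewrite mxE /boost /=; case: a lta3 => [|[|[|?]]] // _.
  all: by rewrite divr_gt0 // addr_gt0 ?invr_gt0.
Qed.

End LorentzElements.

Section InvariantSubgroup.
Variables (R : realType) (c : R) (S : 'cV[R]_4 -> Prop).
Hypothesis c_gt0 : 0 < c.
Hypothesis S_add : forall u v, S u -> S v -> S (u + v).
Hypothesis S_opp : forall u, S u -> S (- u).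
Hypothesis S_lorentz :
  forall L u, proper_orthochronous_lorentz c L -> S u -> S (L *m u).

Let c0 : c != 0 := lt0r_neq0 c_gt0.

Let S_sub u v : S u -> S v -> S (u - v).
Proof. by move=> Su Sv; apply: S_add (S_opp Sv). Qed.

Let S_flip s0 s1 s2 u : s0 ^+ 2 = 1 -> s1 ^+ 2 = 1 -> s2 ^+ 2 = 1 ->
  s0 * s1 * s2 = 1 -> S u -> S (mxn (spatial_flip s0 s1 s2) *m u).
Proof. by move=> *; apply: S_lorentz => //; apply: spatial_flip_lorentz. Qed.

Let S_boost a (k : R) u :
  (a < 3)%N -> 0 < k -> S u -> S (mxn (boost a c k) *m u).
Proof. by move=> lta3 k_gt0; apply: S_lorentz; apply: boost_lorentz. Qed.

Let F01 : 'M[R]_4 := mxn (spatial_flip (-1) (-1) 1).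
Let F02 : 'M[R]_4 := mxn (spatial_flip (-1) 1 (-1)).
Let F12 : 'M[R]_4 := mxn (spatial_flip 1 (-1) (-1)).

Let S_F01 u : S u -> S (F01 *m u).
Proof. by move=> Su; apply: S_flip Su; ring. Qed.
Let S_F02 u : S u -> S (F02 *m u).
Proof. by move=> Su; apply: S_flip Su; ring. Qed.
Let S_F12 u : S u -> S (F12 *m u).
Proof. by move=> Su; apply: S_flip Su; ring. Qed.

Ltac vecn_field :=
  rewrite /axisv /F01 /F02 /F12 ?(mulmxvn, oppvn, addvn);
  apply: vecn_eq => -[|[|[|[|?]]]] // _; rewrite /spatial_flip /boost /= ?invrK;
  field; rewrite ?c0 //.

Lemma invariant_subgroup_axis (u : nat -> R) i : (i < 4)%N -> S (vecn u) ->
  S (axisv i (4 * u i)).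
Proof.
move=> lti4 Su; case: i lti4 => [|[|[|[|?]]]] // _.
- have Sw := S_add Su (S_F12 Su).
  suff -> : axisv 0 (4 * u 0%N) =
      vecn u + F12 *m vecn u - F01 *m (vecn u + F12 *m vecn u).
    exact: S_sub Sw (S_F01 Sw).
  vecn_field.
- have Sw := S_add Su (S_F02 Su).
  suff -> : axisv 1 (4 * u 1%N) =
      vecn u + F02 *m vecn u - F01 *m (vecn u + F02 *m vecn u).
    exact: S_sub Sw (S_F01 Sw).
  vecn_field.
- have Sw := S_add Su (S_F01 Su).
  suff -> : axisv 2 (4 * u 2%N) =
      vecn u + F01 *m vecn u - F02 *m (vecn u + F01 *m vecn u).
    exact: S_sub Sw (S_F02 Sw).
  vecn_field.
- have Sw := S_add Su (S_F12 Su).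
  suff -> : axisv 3 (4 * u 3%N) =
      vecn u + F12 *m vecn u + F01 *m (vecn u + F12 *m vecn u).
    exact: S_add Sw (S_F01 Sw).
  vecn_field.
Qed.

Lemma invariant_subgroup_time_axis j a l : (j < 3)%N -> a != 0 ->
  S (axisv j a) -> S (axisv 3 l).
Proof.
move=> ltj3 a0 Sa; have [k k_gt0 kE] := exists_sub_inv (l * c / a).
have kV_gt0 : 0 < k^-1 by rewrite invr_gt0.
suff -> : axisv 3 l =
    mxn (boost j c k) *m axisv j a - mxn (boost j c k^-1) *m axisv j a.
  exact: S_sub (S_boost ltj3 k_gt0 Sa) (S_boost ltj3 kV_gt0 Sa).
have -> : l = (k - k^-1) * a / c by rewrite kE; field; rewrite a0 c0.
case: j ltj3 {Sa} => [|[|[|?]]] // _; vecn_field; by rewrite lt0r_neq0.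
Qed.

Lemma invariant_subgroup_space_axis a : a != 0 -> S (axisv 3 a) ->
  S (axisv 0 (3 / 2 * c * a)).
Proof.
move=> a0 Sa; have Sw := S_boost (a := 0) isT (ltr0Sn R 1) Sa.
suff -> : axisv 0 (3 / 2 * c * a) =
  mxn (boost 0 c 2) *m axisv 3 a - F01 *m (mxn (boost 0 c 2) *m axisv 3 a).
  exact: S_sub Sw (S_F01 Sw).
vecn_field.
Qed.

Lemma invariant_subgroup_space_axes j mu : (j < 3)%N ->
  (forall l, S (axisv 3 l)) -> S (axisv j mu).
Proof.
move=> ltj3 Stime; set l := 4 / 3 * mu / c.
suff -> : axisv j mu = mxn (boost j c 2) *m axisv 3 l - axisv 3 (5 / 4 * l).
  exact: S_sub (S_boost ltj3 (ltr0Sn R 1) (Stime l)) (Stime _).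
rewrite /l; case: j ltj3 => [|[|[|?]]] // _; vecn_field.
Qed.

Lemma invariant_subgroup_full v w : S v -> v != 0 -> S w.
Proof.
have [u ->] := vecn_surj v; move=> Sv /vecn_neq0[i lti4 ui0].
have ui4_0 : 4 * u i != 0 by rewrite mulf_neq0 ?pnatr_eq0.
have Stime l : S (axisv 3 l).
  move: lti4 ui4_0 (invariant_subgroup_axis lti4 Sv).
  case: i {ui0} => [|[|[|[|?]]]] // _; try exact: invariant_subgroup_time_axis.
  move=> ui4_0 /(invariant_subgroup_space_axis ui4_0).
  apply: (invariant_subgroup_time_axis (j := 0)) => //.
  by rewrite mulf_neq0 // mulf_neq0 // mulf_neq0 ?invr_eq0 ?pnatr_eq0.
have [u' ->] := vecn_surj w; rewrite vecn_axis_sum.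
apply: S_add (Stime _); apply: S_add; first apply: S_add.
all: exact: invariant_subgroup_space_axes.
Qed.

End InvariantSubgroup.

Lemma proper_orthochronous_lorentz1 (R : realType) (c : R) :
  proper_orthochronous_lorentz c 1.
Proof. by split; rewrite ?trmx1 ?mulmx1 ?mul1mx ?det1 ?mxE ?eqxx ?ltr01. Qed.

Section InvariantRelation.
Variables (R : realType) (c : R) (r : 'cV[R]_4 -> 'cV[R]_4 -> Prop).
Hypotheses (r_equiv : equiv_relation_on r) (r_inv : poincare_invariant c r).

Lemma invariant_rel_translate x y b : r x y -> r (x + b) (y + b).
Proof.
by move=> /(r_inv b (proper_orthochronous_lorentz1 c)); rewrite /poincare_act !mul1mx.
Qed.

Lemma invariant_rel0_lorentz L u :
  proper_orthochronous_lorentz c L -> r 0 u -> r 0 (L *m u).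
Proof.
by move=> L_lorentz /(r_inv 0 L_lorentz); rewrite /poincare_act mulmx0 !addr0.
Qed.

Lemma invariant_relE x y : r x y <-> r 0 (y - x).
Proof.
split=> [/(invariant_rel_translate (- x)) | /(invariant_rel_translate x)].
  by rewrite addrN.
by rewrite add0r subrK.
Qed.

Lemma invariant_rel0D u v : r 0 u -> r 0 v -> r 0 (u + v).
Proof.
have [_ [_ r_trans]] := r_equiv.
move=> ru /(invariant_rel_translate u); rewrite add0r addrC; exact: r_trans.
Qed.

Lemma invariant_rel0N u : r 0 u -> r 0 (- u).
Proof.
have [_ [r_sym _]] := r_equiv.
by move=> /(invariant_rel_translate (- u)); rewrite add0r addrN => /r_sym.
Qed.

End InvariantRelation.

Theorem corollary3p9 (R : realType) (c : R) (hc : 0 < c)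
  (r : 'cV[R]_4 -> 'cV[R]_4 -> Prop) :
  equiv_relation_on r -> poincare_invariant c r ->
  (forall x y, r x y) \/ (forall x y, r x y <-> x = y).
Proof.
move=> r_equiv r_inv; have r0_full := invariant_subgroup_full hc
  (invariant_rel0D r_equiv r_inv) (invariant_rel0N r_equiv r_inv)
  (invariant_rel0_lorentz r_inv).
case: (classic (exists2 v, r 0 v & v != 0)) => [[v rv v0] | no_v]; [left | right].
  by move=> x y; apply/(invariant_relE r_inv); apply: r0_full rv v0.
move=> x y; split=> [/(invariant_relE r_inv) ryx | ->]; last exact: r_equiv.1.
have [/eqP | yx0] := eqVneq (y - x) 0; first by rewrite subr_eq0 => /eqP ->.
by case: no_v; exists (y - x).
Qed.
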